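(* Let $S$ be an idempotent semiring. The following are equivalent: (1) $\mathcal{D}^{\bullet}$ is the least distributive lattice congruence on $S$; (2) $S$ satisfies $x+xyx+x\approx x$ and $\mathcal{D}^{+}\subseteq\mathcal{D}^{\bullet}$; (3) $S$ satisfies the identity $x\approx xyx+x+xyx$.
   Context: An idempotent semiring is an algebra $(S,+,\cdot)$ with two binary operations such that $(S,+)$ and $(S,\cdot)$ are bands (associative, with $x+x=x$ and $xx=x$), and both distributive laws $x(y+z)=xy+xz$ and $(x+y)z=xz+yz$ hold; addition is not assumed commutative. A distributive lattice congruence on $S$ is a congruence $\rho$ such that $S/\rho$ satisfies $x+y\approx y+x$, $xy\approx yx$ and $x+xy\approx x$. Green's relations on the reducts: $a\,\mathcal{D}^{\bullet}\,b$ iff $aba=a$ and $bab=b$; $a\,\mathcal{D}^{+}\,b$ iff $a+b+a=a$ and $b+a+b=b$. *)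

Definition idempotent_semiring {S : Type} (add mul : S -> S -> S) : Prop :=
  (forall x y z, add x (add y z) = add (add x y) z) /\
  (forall x, add x x = x) /\
  (forall x y z, mul x (mul y z) = mul (mul x y) z) /\
  (forall x, mul x x = x) /\
  (forall x y z, mul x (add y z) = add (mul x y) (mul x z)) /\
  (forall x y z, mul (add x y) z = add (mul x z) (mul y z)).

Definition congruence {S : Type} (add mul : S -> S -> S) (rho : S -> S -> Prop) : Prop :=
  (forall x, rho x x) /\
  (forall x y, rho x y -> rho y x) /\
  (forall x y z, rho x y -> rho y z -> rho x z) /\
  (forall x y u v, rho x y -> rho u v -> rho (add x u) (add y v)) /\
  (forall x y u v, rho x y -> rho u v -> rho (mul x u) (mul y v)).

Definition dl_congruence {S : Type} (add mul : S -> S -> S) (rho : S -> S -> Prop) : Prop :=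
  congruence add mul rho /\
  (forall x y, rho (add x y) (add y x)) /\
  (forall x y, rho (mul x y) (mul y x)) /\
  (forall x y, rho (add x (mul x y)) x).

Definition least_dl_congruence {S : Type} (add mul : S -> S -> S) (rho : S -> S -> Prop) : Prop :=
  dl_congruence add mul rho /\
  (forall sigma, dl_congruence add mul sigma -> forall a b, rho a b -> sigma a b).

(* Green's D relation on the multiplicative band: a D b iff aba = a and bab = b. *)
Definition Dmul {S : Type} (mul : S -> S -> S) (a b : S) : Prop :=
  mul (mul a b) a = a /\ mul (mul b a) b = b.

(* Green's D relation on the additive band: a+b+a = a and b+a+b = b. *)
Definition Dadd {S : Type} (add : S -> S -> S) (a b : S) : Prop :=
  add (add a b) a = a /\ add (add b a) b = b.

(* In a band, Green's relation D is an equivalence compatible with the product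
   which identifies xy with yx, and every equivalence identifying xy with yx
   contains D.  So in an idempotent semiring D+ lies in every distributive
   lattice congruence, and D• is the least one as soon as it is one at all.
   The expansion x(y + x + y)x = xyx + x + xyx gives (3) => D+ ⊆ D•, and under
   (2) the relation x D+ (xyx + x + xyx) turns into the identity (3).  Under
   (3) every s absorbs each sandwich s y s on both sides, which makes D•
   compatible with addition.  Conversely, if D• is a congruence then
   x + xyx + x D• x, and x (x + xyx + x) x = x + xyx + x makes this an equality. *)

From Stdlib Require Import List.
Import ListNotations.

Section Band.
Variables (T : Type) (f : T -> T -> T).
Hypothesis fA : forall x y z, f x (f y z) = f (f x y) z.
Hypothesis fI : forall x, f x x = x.
Local Infix "*" := f.

(* Words over the band are evaluated in the monoid obtained by adjoining an
   identity, [None] being the value of the empty word.  [band_step] proves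
   [wprod L1 = wprod L2] when [L2] arises from [L1] by replacing one factor,
   using a hypothesis or the idempotence of a word; band identities are then
   proved by exhibiting a chain of words with [via]. *)
Definition omul (p q : option T) : option T :=
  match p, q with
  | Some x, Some y => Some (x * y)
  | None, _ => q
  | _, None => p
  end.

Definition wprod (w : list T) : option T :=
  fold_left (fun p x => omul p (Some x)) w None.

Lemma omulA p q r : omul p (omul q r) = omul (omul p q) r.
Proof. destruct p, q, r; simpl; rewrite ?fA; reflexivity. Qed.

Lemma wprod_app w1 w2 : wprod (w1 ++ w2) = omul (wprod w1) (wprod w2).
Proof.
  unfold wprod; rewrite fold_left_app.
  generalize (fold_left (fun p x => omul p (Some x)) w1 None) as p.
  induction w2 as [|x w2 IH] using rev_ind; intro p.
  - destruct p; reflexivity.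
  - rewrite !fold_left_app; simpl; rewrite IH, omulA; reflexivity.
Qed.

Lemma wprod_infix u v w1 w2 :
  wprod w1 = wprod w2 -> wprod (u ++ w1 ++ v) = wprod (u ++ w2 ++ v).
Proof. intro H; rewrite !wprod_app, H; reflexivity. Qed.

Lemma wprod_square w : wprod (w ++ w) = wprod w.
Proof. rewrite wprod_app; destruct (wprod w); simpl; rewrite ?fI; reflexivity. Qed.

Lemma Some_eq (x y : T) : Some x = Some y -> x = y.
Proof. congruence. Qed.

Ltac word_of_acc t acc :=
  lazymatch t with
  | f ?s ?y => word_of_acc s constr:(y :: acc)
  | _ => constr:(t :: acc)
  end.

Ltac to_words :=
  rewrite ?fA;
  lazymatch goal with
  | |- ?l = ?r =>
    let wl := word_of_acc l (@nil T) in
    let wr := word_of_acc r (@nil T) in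
    apply Some_eq; change (wprod wl = wprod wr)
  end.

Ltac splits w k :=
  first [ k (@nil T) w
        | lazymatch w with
          | ?x :: ?w' => splits w' ltac:(fun p s => k constr:(x :: p) s)
          end ].

Ltac justify :=
  lazymatch goal with
  | |- wprod ?w1 = wprod ?w2 =>
    first [ apply (wprod_square w2)
          | symmetry; apply (wprod_square w1)
          | cbn [wprod fold_left omul]; f_equal; first [assumption | symmetry; assumption] ]
  end.

Ltac band_step :=
  lazymatch goal with
  | |- wprod ?L1 = wprod ?L2 =>
    splits L1 ltac:(fun u r1 =>
    splits L2 ltac:(fun u' r2 =>
    constr_eq u u';
    splits r1 ltac:(fun w1 v =>
    splits r2 ltac:(fun w2 v' =>
    constr_eq v v';
    apply (wprod_infix u v w1 w2); justify))))
  end.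

Ltac via w := transitivity (wprod w); [band_step |].

Lemma Dmul_refl x : Dmul f x x.
Proof. split; rewrite !fI; reflexivity. Qed.

Lemma Dmul_sym a b : Dmul f a b -> Dmul f b a.
Proof. intros [Hab Hba]; split; assumption. Qed.

Lemma Dmul_trans a b c : Dmul f a b -> Dmul f b c -> Dmul f a c.
Proof.
  assert (half : forall a b c, a * b * a = a -> b * c * b = b -> a * c * a = a).
  { clear a b c; intros a b c Hab Hbc; to_words.
    via [a;b;a;c;a]. via [a;b;c;b;a;c;a]. via [a;b;c;a;b;c;b;a;c;a].
    via [a;b;c;a;b;a;c;a]. via [a;b;c;a;b;a;c;a;b;a]. via [a;b;c;a;b;a].
    via [a;b;c;a;b;c;b;a]. via [a;b;c;b;a]. via [a;b;a]. band_step. }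
  intros [Hab Hba] [Hbc Hcb]; split; [exact (half a b c Hab Hbc) | exact (half c b a Hcb Hba)].
Qed.

Lemma Dmul_mulr a b u : Dmul f a b -> Dmul f (a * u) (b * u).
Proof.
  assert (half : forall a b, Dmul f a b -> a * u * (b * u) * (a * u) = a * u).
  { clear a b; intros a b [Hab Hba]; to_words.
    via [a;u;b;u;a;b;a;u]. via [a;u;b;u;a;b;a;u;b;a;u]. via [a;u;b;u;a;u;b;a;u].
    via [a;u;a;u;b;u;a;u;b;a;u]. via [a;u;a;u;b;a;u]. via [a;u;b;a;u].
    via [a;b;a;u;b;a;u]. via [a;b;a;u]. band_step. }
  intro Dab; split; apply half; [exact Dab | apply Dmul_sym, Dab].
Qed.

Lemma Dmul_mull a b u : Dmul f a b -> Dmul f (u * a) (u * b).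
Proof.
  assert (half : forall a b, Dmul f a b -> u * a * (u * b) * (u * a) = u * a).
  { clear a b; intros a b [Hab Hba]; to_words.
    via [u;a;b;a;u;b;u;a]. via [u;a;b;u;a;b;a;u;b;u;a]. via [u;a;b;u;a;u;b;u;a].
    via [u;a;b;u;b;u;a;u;b;u;a]. via [u;a;b;u;b;u;a]. via [u;a;b;u;a].
    via [u;a;b;u;a;b;a]. via [u;a;b;a]. band_step. }
  intro Dab; split; apply half; [exact Dab | apply Dmul_sym, Dab].
Qed.

Lemma Dmul_mul a b c d : Dmul f a b -> Dmul f c d -> Dmul f (a * c) (b * d).
Proof.
  intros Dab Dcd; apply Dmul_trans with (b * c).
  - apply Dmul_mulr, Dab.
  - apply Dmul_mull, Dcd.
Qed.

Lemma Dmul_mulC x y : Dmul f (x * y) (y * x).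
Proof.
  assert (half : forall x y, x * y * (y * x) * (x * y) = x * y).
  { intros a b; to_words. via [a;b;a;a;b]. via [a;b;a;b]. band_step. }
  split; apply half.
Qed.

Lemma Dmul_sub_commutative (R : T -> T -> Prop) :
  (forall x y, R x y -> R y x) -> (forall x y z, R x y -> R y z -> R x z) ->
  (forall x y, R (x * y) (y * x)) -> forall a b, Dmul f a b -> R a b.
Proof.
  intros Rsym Rtrans RC a b [Hab Hba].
  assert (Ra : R a (a * b)) by (generalize (RC (a * b) a); rewrite Hab, fA, fI; trivial).
  assert (Rb : R b (b * a)) by (generalize (RC (b * a) b); rewrite Hba, fA, fI; trivial).
  apply Rtrans with (a * b); [exact Ra |].
  apply Rtrans with (b * a); [apply RC | apply Rsym, Rb].
Qed.

Lemma sandwich_idem x y : x * (x * y * x) * x = x * y * x.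
Proof. to_words. via [x;y;x;x]. band_step. Qed.

Lemma Dmul_sandwich x u : x * u * x = x -> Dmul f x (u * x * u).
Proof.
  intro Hxu; split; to_words.
  - via [x;u;x]. band_step.
  - via [u;x;u;x;u]. band_step.
Qed.

Lemma sandwich_absorb x u : x = u * x * u -> x * u = x /\ u * x = x.
Proof.
  intro Hx; split; to_words.
  - via [u;x;u;u]. via [u;x;u]. band_step.
  - via [u;u;x;u]. via [u;x;u]. band_step.
Qed.

Lemma eq_of_absorb a c r :
  a * c * r = a * c -> r * a * c = a * c -> a * r = r -> r * c = r -> r = a * c.
Proof.
  intros Hacr Hrac Har Hrc; to_words.
  via [r;r]. via [r;c;r]. via [r;c;a;r]. via [r;c;a;c;a;r]. via [r;a;c;a;r].
  via [r;a;c;r]. via [a;c;r]. band_step.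
Qed.
End Band.

Section IdempotentSemiring.
Variables (S : Type) (add mul : S -> S -> S).
Hypothesis HS : idempotent_semiring add mul.
Local Infix "+" := add.
Local Infix "*" := mul.

Let aA : forall x y z, x + (y + z) = x + y + z := proj1 HS.
Let aI : forall x, x + x = x := proj1 (proj2 HS).
Let mA : forall x y z, x * (y * z) = x * y * z := proj1 (proj2 (proj2 HS)).
Let mI : forall x, x * x = x := proj1 (proj2 (proj2 (proj2 HS))).
Let dL : forall x y z, x * (y + z) = x * y + x * z := proj1 (proj2 (proj2 (proj2 (proj2 HS)))).
Let dR : forall x y z, (x + y) * z = x * z + y * z := proj2 (proj2 (proj2 (proj2 (proj2 HS)))).

Definition sandwich_identity : Prop := forall x y, x = x * y * x + x + x * y * x.
Definition sandwich_absorption : Prop := forall x y, x + x * y * x + x = x.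
Definition Dadd_sub_Dmul : Prop := forall a b, Dadd add a b -> Dmul mul a b.

Lemma mul_sandwich_add x y : x * (y + x + y) * x = x * y * x + x + x * y * x.
Proof. rewrite !dL, !dR, !mI; reflexivity. Qed.

Lemma dl_congruence_Dadd sigma : dl_congruence add mul sigma ->
  forall a b, Dadd add a b -> sigma a b.
Proof.
  intros [[_ [Ssym [Strans _]]] [SC _]].
  exact (Dmul_sub_commutative _ add aA aI sigma Ssym Strans SC).
Qed.

Lemma dl_congruence_Dmul sigma : dl_congruence add mul sigma ->
  forall a b, Dmul mul a b -> sigma a b.
Proof.
  intros [[_ [Ssym [Strans _]]] [_ [SC _]]].
  exact (Dmul_sub_commutative _ mul mA mI sigma Ssym Strans SC).
Qed.

Lemma sandwich_absorption_of_dl_Dmul :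
  dl_congruence add mul (Dmul mul) -> sandwich_absorption.
Proof.
  intros [[Drefl [_ [_ [Dadd_compat _]]]] [_ [_ Dabsorb]]] x y.
  assert (D : Dmul mul (x + x * (y * x) + x) (x + x))
    by (apply Dadd_compat; [apply Dabsorb | apply Drefl]).
  rewrite mA, aI in D; destruct D as [_ D].
  transitivity (x * (x + x * y * x + x) * x); [| exact D].
  rewrite !dL, !dR, !mI, (sandwich_idem _ mul mA mI); reflexivity.
Qed.

Lemma sandwich_identity_absorption : sandwich_identity -> sandwich_absorption.
Proof.
  intros H3 x y.
  destruct (sandwich_absorb _ add aA aI x (x * y * x) (H3 x y)) as [Hxu _].
  rewrite Hxu, aI; reflexivity.
Qed.

Lemma sandwich_identity_Dadd_sub_Dmul : sandwich_identity -> Dadd_sub_Dmul.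
Proof.
  intros H3 a b [Hab Hba]; split.
  - rewrite <- Hba, mul_sandwich_add; symmetry; apply H3.
  - rewrite <- Hab, mul_sandwich_add; symmetry; apply H3.
Qed.

Lemma sandwich_identity_of_absorption :
  sandwich_absorption -> Dadd_sub_Dmul -> sandwich_identity.
Proof.
  intros H2 HD x y; set (u := x * y * x).
  assert (D : Dmul mul x (u + x + u)) by apply HD, (Dmul_sandwich _ add aA aI), H2.
  destruct D as [D _].
  assert (Hxux : x * u * x = u) by apply (sandwich_idem _ mul mA mI).
  rewrite mul_sandwich_add, Hxux in D; symmetry; exact D.
Qed.

Lemma Dmul_dl_congruence_conditions : dl_congruence add mul (Dmul mul) ->
  sandwich_absorption /\ Dadd_sub_Dmul.
Proof.
  intro Hdl; split.
  - exact (sandwich_absorption_of_dl_Dmul Hdl).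
  - exact (dl_congruence_Dadd _ Hdl).
Qed.

Lemma sandwich_identity_iff : sandwich_absorption /\ Dadd_sub_Dmul <-> sandwich_identity.
Proof.
  split.
  - intros [H2 HD]; exact (sandwich_identity_of_absorption H2 HD).
  - intro H3; split.
    + exact (sandwich_identity_absorption H3).
    + exact (sandwich_identity_Dadd_sub_Dmul H3).
Qed.

Section SandwichIdentity.
Hypothesis H3 : sandwich_identity.

Lemma Dmul_add a b c d : Dmul mul a b -> Dmul mul c d -> Dmul mul (a + c) (b + d).
Proof.
  assert (half : forall a b c d, a * b * a = a -> c * d * c = c ->
                   (a + c) * (b + d) * (a + c) = a + c).
  { clear a b c d; intros a b c d Hab Hcd.
    (* s := a + c absorbs r := s (b + d) s on both sides by (3), while the
       expansion of r starts with aba = a and ends with cdc = c. *)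
    destruct (sandwich_absorb _ add aA aI (a + c) ((a + c) * (b + d) * (a + c)) (H3 _ _))
      as [Hsr Hrs].
    apply (eq_of_absorb _ add aA aI); [exact Hsr | rewrite <- aA; exact Hrs | |];
      rewrite !dL, !dR, Hab, Hcd, !aA.
    - rewrite aI; reflexivity.
    - rewrite <- (aA _ c c), aI; reflexivity. }
  intros [Hab Hba] [Hcd Hdc]; split; apply half; assumption.
Qed.

Lemma Dmul_dl_congruence : dl_congruence add mul (Dmul mul).
Proof.
  split; [split; [|split; [|split; [|split]]] | split; [|split]].
  - exact (Dmul_refl _ mul mI).
  - exact (Dmul_sym _ mul).
  - exact (Dmul_trans _ mul mA mI).
  - exact Dmul_add.
  - exact (Dmul_mul _ mul mA mI).
  - intros x y; apply (sandwich_identity_Dadd_sub_Dmul H3), (Dmul_mulC _ add aA aI).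
  - exact (Dmul_mulC _ mul mA mI).
  - intros x y; destruct (sandwich_absorb _ add aA aI x (x * y * x) (H3 x y)) as [Hx _].
    split.
    + rewrite dR, mI, Hx, dL, mI, mA, mI; reflexivity.
    + rewrite dL, mI, mA, mI, dR, mI, Hx; reflexivity.
Qed.

Lemma least_dl_congruence_Dmul : least_dl_congruence add mul (Dmul mul).
Proof. split; [exact Dmul_dl_congruence | exact dl_congruence_Dmul]. Qed.
End SandwichIdentity.
End IdempotentSemiring.

Theorem theorem3p1 (S : Type) (add mul : S -> S -> S)
  (HS : idempotent_semiring add mul) :
  (least_dl_congruence add mul (Dmul mul) <->
     ((forall x y, add (add x (mul (mul x y) x)) x = x) /\
      (forall a b, Dadd add a b -> Dmul mul a b))) /\
  (((forall x y, add (add x (mul (mul x y) x)) x = x) /\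
    (forall a b, Dadd add a b -> Dmul mul a b)) <->
     (forall x y, x = add (add (mul (mul x y) x) x) (mul (mul x y) x))).
Proof.
  pose proof (sandwich_identity_iff S add mul HS) as iff23.
  split; [split |].
  - intros [Hdl _]; exact (Dmul_dl_congruence_conditions S add mul HS Hdl).
  - intro H2; exact (least_dl_congruence_Dmul S add mul HS (proj1 iff23 H2)).
  - exact iff23.
Qed.
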